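(* Let $A\in\mathbb{R}^{n\times m}$ have distinct columns with $a_1=0$, let $c\in\mathbb{R}^m$ and $f=\mathrm{Sig}(A,c)$. Then $$\sup\{\gamma\in\mathbb{R} : c-\gamma e_1\in C_{\mathrm{SAGE}}(A)\}=\inf\{c^\top v : v\in C_{\mathrm{SAGE}}(A)^\dagger,\ v_1=1\},$$ i.e. strong duality holds between the primal and dual formulations of $f_{\mathsf{SAGE}}$ (with the conventions $\sup\emptyset=-\infty$).
   Context: Let $A\in\mathbb{R}^{n\times m}$ have distinct columns $a_1,\dots,a_m$. For $c\in\mathbb{R}^m$, $\mathrm{Sig}(A,c)$ denotes the function $x\mapsto\sum_{i=1}^m c_i\exp(a_i^\top x)$ on $\mathbb{R}^n$. $C_{\mathrm{NNS}}(A)=\{c\in\mathbb{R}^m:\mathrm{Sig}(A,c)(x)\ge 0\ \forall x\in\mathbb{R}^n\}$. For $k\in[m]$, the $k$-th AGE cone is $C_{\mathrm{AGE}}(A,k)=\{c\in C_{\mathrm{NNS}}(A): c_i\ge 0\ \forall i\ne k\}$, and the SAGE cone is the Minkowski sum $C_{\mathrm{SAGE}}(A)=\sum_{k=1}^m C_{\mathrm{AGE}}(A,k)$. For a convex cone $K\subset\mathbb{R}^m$, $K^\dagger=\{y: y^\top x\ge 0\ \forall x\in K\}$. $e_1$ is the first standard basis vector. *)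

From Stdlib Require Import Reals.
Open Scope R_scope.

Fixpoint sumR (k : nat) (f : nat -> R) : R :=
  match k with
  | O => 0
  | S k' => sumR k' f + f k'
  end.

(* Conventions: a matrix A in R^{n x m} is a function A : nat -> nat -> R,
   with entry (row j, column i) = A j i, only j < n, i < m relevant.
   Vectors in R^m / R^n are functions nat -> R (only the first m / n
   coordinates are relevant).  Indices are 0-based, so the paper's
   "1"st index is 0. *)

Definition Sig (n m : nat) (A : nat -> nat -> R) (c : nat -> R) (x : nat -> R) : R :=
  sumR m (fun i => c i * exp (sumR n (fun j => A j i * x j))).

Definition dot (m : nat) (u v : nat -> R) : R := sumR m (fun i => u i * v i).

Definition C_NNS (n m : nat) (A : nat -> nat -> R) (c : nat -> R) : Prop :=
  forall x : nat -> R, 0 <= Sig n m A c x.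

Definition C_AGE (n m : nat) (A : nat -> nat -> R) (k : nat) (c : nat -> R) : Prop :=
  C_NNS n m A c /\ (forall i, (i < m)%nat -> i <> k -> 0 <= c i).

Definition C_SAGE (n m : nat) (A : nat -> nat -> R) (c : nat -> R) : Prop :=
  exists cs : nat -> nat -> R,
    (forall k, (k < m)%nat -> C_AGE n m A k (cs k)) /\
    (forall i, (i < m)%nat -> c i = sumR m (fun k => cs k i)).

Definition dual_cone (m : nat) (K : (nat -> R) -> Prop) (y : nat -> R) : Prop :=
  forall x, K x -> 0 <= dot m y x.

Definition e1 (i : nat) : R := if Nat.eqb i 0 then 1 else 0.

Definition distinct_columns (n m : nat) (A : nat -> nat -> R) : Prop :=
  forall i k, (i < m)%nat -> (k < m)%nat -> i <> k ->
    exists j, (j < n)%nat /\ A j i <> A j k.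

(* Extended reals, for sup/inf with sup(empty) = -oo, inf(empty) = +oo. *)
Inductive ER : Type := Fin (r : R) | PInf | MInf.

Definition ERle (x y : ER) : Prop :=
  match x, y with
  | MInf, _ => True
  | _, PInf => True
  | Fin a, Fin b => a <= b
  | _, _ => False
  end.

Definition is_esup (S : R -> Prop) (s : ER) : Prop :=
  (forall x, S x -> ERle (Fin x) s) /\
  (forall u, (forall x, S x -> ERle (Fin x) u) -> ERle s u).

Definition is_einf (S : R -> Prop) (s : ER) : Prop :=
  (forall x, S x -> ERle s (Fin x)) /\
  (forall u, (forall x, S x -> ERle u (Fin x)) -> ERle u s).

(* Weak duality is immediate from the definition of the dual cone.  For strong duality it
   suffices to separate every vector outside the SAGE cone strictly from it by a dual vector:
   a separator of [c - γ e1] with [γ] infeasible, mixed with the all-ones dual vector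
   (evaluation at [x = 0]) and normalised in its first coordinate, gives dual feasible points
   of value below any [b > γ].  Separation comes from a nearest point of the cone, i.e. a
   nearest sum of AGE vectors.  Minimising sequences of AGE decompositions are bounded: when
   the columns are distinct, evaluating an element of the [k]-th AGE cone at points where
   [a_i] exceeds [a_k] by [ln (m+1)] bounds its off-diagonal part by a monotone linear
   functional of the total sum.  Bolzano-Weierstrass and closedness of the AGE cones then
   produce the nearest decomposition. *)

From Stdlib Require Import Reals Lra Lia Psatz List Classical ClassicalEpsilon.
Open Scope R_scope.

(** * Finite sums *)

Lemma sumR_ext k f g : (forall i, (i < k)%nat -> f i = g i) -> sumR k f = sumR k g.
Proof.
  induction k as [|k IH]; intros H; simpl; [reflexivity|].
  rewrite IH by (intros; apply H; lia). rewrite H by lia. reflexivity.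
Qed.

Lemma sumR_le k f g : (forall i, (i < k)%nat -> f i <= g i) -> sumR k f <= sumR k g.
Proof.
  induction k as [|k IH]; intros H; simpl; [lra|].
  assert (sumR k f <= sumR k g) by (apply IH; intros; apply H; lia).
  assert (f k <= g k) by (apply H; lia). lra.
Qed.

Lemma sumR_const k a : sumR k (fun _ => a) = INR k * a.
Proof. induction k as [|k IH]; simpl sumR; [simpl; lra|]. rewrite IH, S_INR. lra. Qed.

Lemma sumR_nonneg k f : (forall i, (i < k)%nat -> 0 <= f i) -> 0 <= sumR k f.
Proof.
  intros H. replace 0 with (sumR k (fun _ => 0)) by (rewrite sumR_const; lra).
  apply sumR_le; exact H.
Qed.

Lemma sumR_plus k f g : sumR k (fun i => f i + g i) = sumR k f + sumR k g.
Proof. induction k as [|k IH]; simpl; [lra|]. rewrite IH. lra. Qed.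

Lemma sumR_scal k a f : sumR k (fun i => a * f i) = a * sumR k f.
Proof. induction k as [|k IH]; simpl; [lra|]. rewrite IH. lra. Qed.

Lemma sumR_minus k f g : sumR k (fun i => f i - g i) = sumR k f - sumR k g.
Proof. induction k as [|k IH]; simpl; [lra|]. rewrite IH. lra. Qed.

Lemma sumR_swap a b (f : nat -> nat -> R) :
  sumR a (fun i => sumR b (fun j => f i j)) = sumR b (fun j => sumR a (fun i => f i j)).
Proof.
  induction a as [|a IH]; simpl.
  - rewrite sumR_const. lra.
  - rewrite IH, <- sumR_plus. reflexivity.
Qed.

Lemma sumR_ge_term k f j :
  (forall i, (i < k)%nat -> 0 <= f i) -> (j < k)%nat -> f j <= sumR k f.
Proof.
  induction k as [|k IH]; intros H Hj; [lia|]. simpl.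
  assert (0 <= f k) by (apply H; lia).
  destruct (Nat.eq_dec j k) as [->|Hjk].
  - assert (0 <= sumR k f) by (apply sumR_nonneg; intros; apply H; lia). lra.
  - assert (f j <= sumR k f) by (apply IH; [intros; apply H|]; lia). lra.
Qed.

Lemma sumR_split k f j : (j < k)%nat ->
  sumR k f = f j + sumR k (fun i => if Nat.eqb i j then 0 else f i).
Proof.
  induction k as [|k IH]; intros Hj; [lia|]. simpl.
  destruct (Nat.eq_dec j k) as [->|Hjk].
  - rewrite Nat.eqb_refl, (sumR_ext k (fun i => if Nat.eqb i k then 0 else f i) f); [lra|].
    intros i Hi. destruct (Nat.eqb_spec i k); [lia|reflexivity].
  - rewrite (IH ltac:(lia)). destruct (Nat.eqb_spec k j); [lia|lra].
Qed.

Lemma sumR_single k f j : (j < k)%nat ->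
  (forall i, (i < k)%nat -> i <> j -> f i = 0) -> sumR k f = f j.
Proof.
  intros Hj H. rewrite (sumR_split k f j Hj), (sumR_ext k _ (fun _ => 0)).
  - rewrite sumR_const. lra.
  - intros i Hi. destruct (Nat.eqb_spec i j); auto.
Qed.

Lemma Un_cv_const a : Un_cv (fun _ => a) a.
Proof. intros e He. exists O. intros. unfold Rdist. rewrite Rminus_diag, Rabs_R0. exact He. Qed.

Lemma sumR_cv k (u : nat -> nat -> R) f :
  (forall i, (i < k)%nat -> Un_cv (fun l => u l i) (f i)) ->
  Un_cv (fun l => sumR k (u l)) (sumR k f).
Proof.
  induction k as [|k IH]; intros H; simpl.
  - apply Un_cv_const.
  - apply CV_plus; [apply IH; intros|]; apply H; lia.
Qed.

Lemma sumR_sq_le0 k f : sumR k (fun i => f i * f i) <= 0 -> forall i, (i < k)%nat -> f i = 0.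
Proof.
  intros H i Hi.
  assert (f i * f i <= sumR k (fun i => f i * f i)) by
    (apply (sumR_ge_term k (fun i => f i * f i)); [intros; nra | exact Hi]).
  nra.
Qed.

(** * Signomials and AGE/SAGE cones *)

Definition expo (n : nat) (A : nat -> nat -> R) (i : nat) (x : nat -> R) : R :=
  sumR n (fun j => A j i * x j).

Definition msum (m : nat) (cs : nat -> nat -> R) (i : nat) : R := sumR m (fun k => cs k i).

Definition SAGE_decomp n m A (cs : nat -> nat -> R) : Prop :=
  forall k, (k < m)%nat -> C_AGE n m A k (cs k).

Section Signomials.
Variables (n m : nat) (A : nat -> nat -> R).

Lemma Sig_ext c d x : (forall i, (i < m)%nat -> c i = d i) -> Sig n m A c x = Sig n m A d x.
Proof. intros H. apply sumR_ext. intros i Hi. rewrite H; auto. Qed.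

Lemma Sig_plus c d x : Sig n m A (fun i => c i + d i) x = Sig n m A c x + Sig n m A d x.
Proof. unfold Sig. rewrite <- sumR_plus. apply sumR_ext. intros; ring. Qed.

Lemma Sig_scal a c x : Sig n m A (fun i => a * c i) x = a * Sig n m A c x.
Proof. unfold Sig. rewrite <- sumR_scal. apply sumR_ext. intros; ring. Qed.

Lemma Sig_msum cs x : Sig n m A (msum m cs) x = sumR m (fun k => Sig n m A (cs k) x).
Proof.
  unfold Sig, msum.
  rewrite (sumR_swap m m (fun k i => cs k i * exp (sumR n (fun j => A j i * x j)))).
  apply sumR_ext. intros i _. rewrite Rmult_comm, <- sumR_scal. apply sumR_ext. intros; ring.
Qed.

Lemma Sig_at_0 c : Sig n m A c (fun _ => 0) = sumR m c.
Proof.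
  apply sumR_ext. intros i _.
  rewrite (sumR_ext n _ (fun _ => 0)), sumR_const, Rmult_0_r, exp_0 by (intros; ring). ring.
Qed.

Lemma NNS_of_nonneg c : (forall i, (i < m)%nat -> 0 <= c i) -> C_NNS n m A c.
Proof.
  intros H x. apply sumR_nonneg. intros i Hi.
  apply Rmult_le_pos; [apply H; exact Hi | apply Rlt_le, exp_pos].
Qed.

Lemma AGE_plus k c d : C_AGE n m A k c -> C_AGE n m A k d -> C_AGE n m A k (fun i => c i + d i).
Proof.
  intros [Hc Hc'] [Hd Hd']. split.
  - intros x. rewrite Sig_plus. specialize (Hc x). specialize (Hd x). lra.
  - intros i Hi Hik. specialize (Hc' i Hi Hik). specialize (Hd' i Hi Hik). lra.
Qed.

Lemma AGE_scal k a c : 0 <= a -> C_AGE n m A k c -> C_AGE n m A k (fun i => a * c i).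
Proof.
  intros Ha [Hc Hc']. split.
  - intros x. rewrite Sig_scal. specialize (Hc x). nra.
  - intros i Hi Hik. specialize (Hc' i Hi Hik). nra.
Qed.

Lemma AGE_0 k : C_AGE n m A k (fun _ => 0).
Proof. split; [apply NNS_of_nonneg|]; intros; lra. Qed.

Lemma AGE_in_SAGE k c : (k < m)%nat -> C_AGE n m A k c -> C_SAGE n m A c.
Proof.
  intros Hk Hc. exists (fun j => if Nat.eqb j k then c else fun _ => 0). split.
  - intros j _. destruct (Nat.eqb_spec j k) as [->|]; [exact Hc | apply AGE_0].
  - intros i _. rewrite (sumR_single m _ k Hk), Nat.eqb_refl; [reflexivity|].
    intros j _ Hjk. destruct (Nat.eqb_spec j k); [lia | reflexivity].
Qed.

Lemma SAGE_NNS c : C_SAGE n m A c -> C_NNS n m A c.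
Proof.
  intros [cs [Hcs Hc]] x. rewrite (Sig_ext c (msum m cs)) by exact Hc.
  rewrite Sig_msum. apply sumR_nonneg. intros k Hk. apply (Hcs k Hk).
Qed.

Lemma e1_in_SAGE : (0 < m)%nat -> C_SAGE n m A e1.
Proof.
  intros Hm. apply (AGE_in_SAGE 0); [exact Hm|]. split.
  - apply NNS_of_nonneg. intros i _. unfold e1. destruct (Nat.eqb i 0); lra.
  - intros i _ Hi. unfold e1. destruct (Nat.eqb_spec i 0); [lia | lra].
Qed.

End Signomials.

Lemma dot_comm m u v : dot m u v = dot m v u.
Proof. apply sumR_ext. intros; ring. Qed.

Lemma dot_comb m a u b w x :
  dot m (fun i => a * u i + b * w i) x = a * dot m u x + b * dot m w x.
Proof. unfold dot. rewrite <- !sumR_scal, <- sumR_plus. apply sumR_ext. intros; ring. Qed.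

Lemma dot_e1 m v : (0 < m)%nat -> dot m v e1 = v 0%nat.
Proof.
  intros Hm. unfold dot. rewrite (sumR_single m _ 0 Hm); [unfold e1; simpl; ring|].
  intros i _ Hi. unfold e1. destruct (Nat.eqb_spec i 0); [lia | ring].
Qed.

Lemma dual_cone_comb m (K : (nat -> R) -> Prop) a u b w :
  0 <= a -> 0 <= b -> dual_cone m K u -> dual_cone m K w ->
  dual_cone m K (fun i => a * u i + b * w i).
Proof.
  intros Ha Hb Hu Hw x Hx. rewrite dot_comb.
  specialize (Hu x Hx). specialize (Hw x Hx). nra.
Qed.

Lemma ones_in_SAGE_dual n m A : dual_cone m (C_SAGE n m A) (fun _ => 1).
Proof.
  intros c Hc. unfold dot. rewrite (sumR_ext m _ c) by (intros; ring).
  rewrite <- (Sig_at_0 n m A). apply SAGE_NNS; exact Hc.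
Qed.

(** * Projection onto the SAGE cone *)

Definition sqdist (m : nat) (p u : nat -> R) : R := sumR m (fun i => (u i - p i) * (u i - p i)).

Lemma sqdist_ext m p u w : (forall i, (i < m)%nat -> u i = w i) -> sqdist m p u = sqdist m p w.
Proof. intros H. apply sumR_ext. intros i Hi. rewrite H; auto. Qed.

Lemma sqdist_nonneg m p u : 0 <= sqdist m p u.
Proof. apply sumR_nonneg. intros; apply Rle_0_sqr. Qed.

Lemma sqdist_shift m p u d t : sqdist m p (fun i => u i + t * d i) =
  sqdist m p u + t * (2 * dot m (fun i => u i - p i) d + t * dot m d d).
Proof.
  unfold sqdist, dot. rewrite <- !sumR_scal, <- sumR_plus, <- sumR_scal, <- sumR_plus.
  apply sumR_ext. intros; ring.
Qed.

Lemma affine_nonneg_near_0 a b : (forall t, 0 < t < 1 -> 0 <= a + t * b) -> 0 <= a.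
Proof.
  intros H. apply Rnot_lt_le. intros Ha.
  assert (Hb := Rabs_pos b). set (t := - a / (Rabs b - a + 1)).
  assert (Ht : t * (Rabs b - a + 1) = - a) by (unfold t; field; lra).
  assert (0 < t) by (unfold t; apply Rdiv_lt_0_compat; lra).
  assert (t * b <= t * Rabs b) by (apply Rmult_le_compat_l; [lra | apply Rle_abs]).
  specialize (H t ltac:(split; nra)). nra.
Qed.

Lemma sqdist_first_order m p u d :
  (forall t, 0 < t < 1 -> sqdist m p u <= sqdist m p (fun i => u i + t * d i)) ->
  0 <= dot m (fun i => u i - p i) d.
Proof.
  intros H. cut (0 <= 2 * dot m (fun i => u i - p i) d); [lra|].
  apply (affine_nonneg_near_0 _ (dot m d d)). intros t Ht.
  specialize (H t Ht). rewrite sqdist_shift in H.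
  apply (Rmult_le_reg_l t); lra.
Qed.

Lemma dot_msum m v cs : dot m v (msum m cs) = sumR m (fun k => dot m v (cs k)).
Proof.
  unfold dot, msum. rewrite (sumR_swap m m (fun k i => v i * cs k i)).
  apply sumR_ext. intros i _. symmetry. apply sumR_scal.
Qed.

Definition decomp_add (cs : nat -> nat -> R) (k : nat) (kap : nat -> R) : nat -> nat -> R :=
  fun j => if Nat.eqb j k then (fun i => cs j i + kap i) else cs j.

Lemma msum_decomp_add m cs k kap i :
  (k < m)%nat -> msum m (decomp_add cs k kap) i = msum m cs i + kap i.
Proof.
  intros Hk. unfold msum, decomp_add.
  rewrite (sumR_split m _ k Hk), (sumR_split m (fun j => cs j i) k Hk), Nat.eqb_refl.
  rewrite (sumR_ext m (fun j => if Nat.eqb j k then 0 else _) (fun j => if Nat.eqb j k then 0 else cs j i)).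
  - ring.
  - intros j _. destruct (Nat.eqb j k); reflexivity.
Qed.

Lemma decomp_add_SAGE_decomp n m A cs k kap :
  SAGE_decomp n m A cs -> C_AGE n m A k kap -> SAGE_decomp n m A (decomp_add cs k kap).
Proof.
  intros Hcs Hkap j Hj. unfold decomp_add.
  destruct (Nat.eqb_spec j k) as [->|]; [apply AGE_plus; auto | auto].
Qed.

Lemma separation_of_nearest_decomp n m A p cs :
  SAGE_decomp n m A cs ->
  (forall cs', SAGE_decomp n m A cs' -> sqdist m p (msum m cs) <= sqdist m p (msum m cs')) ->
  ~ C_SAGE n m A p -> exists v, dual_cone m (C_SAGE n m A) v /\ dot m v p < 0.
Proof.
  intros Hcs Hmin Hp. set (u := msum m cs). set (v := fun i => u i - p i). exists v.
  assert (Hage : forall k kap, (k < m)%nat -> C_AGE n m A k kap -> 0 <= dot m v kap).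
  { intros k kap Hk Hkap. apply sqdist_first_order. intros t Ht.
    rewrite (sqdist_ext m p (fun i => u i + t * kap i) (msum m (decomp_add cs k (fun i => t * kap i))))
      by (intros; rewrite msum_decomp_add; auto).
    apply Hmin, decomp_add_SAGE_decomp, AGE_scal; auto; lra. }
  assert (Hshrink : 0 <= dot m v (fun i => -1 * u i)).
  { apply sqdist_first_order. intros t Ht.
    rewrite (sqdist_ext m p (fun i => u i + t * (-1 * u i)) (msum m (fun k i => (1 - t) * cs k i)))
      by (intros; unfold u, msum; rewrite sumR_scal; ring).
    apply Hmin. intros k Hk. apply AGE_scal; [lra | auto]. }
  split.
  - intros c [cs' [Hcs' Hc]]. unfold dot.
    rewrite (sumR_ext m _ (fun i => v i * msum m cs' i)) by (intros; rewrite Hc; auto).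
    change (0 <= dot m v (msum m cs')). rewrite dot_msum.
    apply sumR_nonneg. intros k Hk. apply (Hage k); auto.
  - assert (Hv : 0 < dot m v v).
    { apply Rnot_le_lt. intros Hle. apply Hp. exists cs. split; [exact Hcs|].
      intros i Hi. assert (Hvi : v i = 0) by (apply (sumR_sq_le0 m v); auto).
      unfold v, u, msum in Hvi. lra. }
    assert (Hpv : dot m v p = dot m v u - dot m v v)
      by (unfold dot; rewrite <- sumR_minus; apply sumR_ext; intros; unfold v; ring).
    assert (Hu : dot m v (fun i => -1 * u i) = - dot m v u)
      by (unfold dot; replace (- sumR m (fun i => v i * u i))
                        with (-1 * sumR m (fun i => v i * u i)) by ring;
          rewrite <- sumR_scal; apply sumR_ext; intros; ring).
    lra.
Qed.

(** * Convergent subsequences *)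

Definition strictly_increasing (psi : nat -> nat) : Prop := forall a, (psi a < psi (S a))%nat.

Lemma strictly_increasing_le psi : strictly_increasing psi ->
  forall a b, (a <= b)%nat -> (psi a <= psi b)%nat.
Proof. intros H a b Hab. induction Hab as [|b Hab IH]; [lia|]. specialize (H b). lia. Qed.

Lemma strictly_increasing_ge_id psi : strictly_increasing psi -> forall a, (a <= psi a)%nat.
Proof. intros H a. induction a as [|a IH]; [lia|]. specialize (H a). lia. Qed.

Lemma strictly_increasing_comp psi chi :
  strictly_increasing psi -> strictly_increasing chi -> strictly_increasing (fun a => psi (chi a)).
Proof.
  intros Hpsi Hchi a. specialize (Hchi a).
  assert (psi (S (chi a)) <= psi (chi (S a)))%nat by (apply strictly_increasing_le; auto).
  specialize (Hpsi (chi a)). lia.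
Qed.

Lemma Un_cv_subseq u L psi :
  strictly_increasing psi -> Un_cv u L -> Un_cv (fun l => u (psi l)) L.
Proof.
  intros Hpsi Hu e He. destruct (Hu e He) as [N HN]. exists N. intros l Hl. apply HN.
  assert (l <= psi l)%nat by (apply strictly_increasing_ge_id; auto). lia.
Qed.

Lemma Un_cv_of_inv_bound u L :
  (forall a, Rabs (u a - L) < / (INR a + 1)) -> Un_cv u L.
Proof.
  intros H e He. destruct (archimed_cor1 e He) as [N [HN HN0]]. exists N. intros a Ha.
  eapply Rlt_trans; [apply H|]. eapply Rle_lt_trans; [|exact HN].
  apply Rinv_le_contravar; [apply lt_0_INR; lia|].
  assert (INR N <= INR a) by (apply le_INR; lia). lra.
Qed.

Lemma ValAdh_cv_subseq u L :
  ValAdh u L -> exists psi, strictly_increasing psi /\ Un_cv (fun l => u (psi l)) L.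
Proof.
  intros HL.
  assert (Hnext : forall Na : nat * nat, exists p,
             (fst Na <= p)%nat /\ Rabs (u p - L) < / (INR (snd Na) + 1)).
  { intros [N a]. assert (Ha : 0 < / (INR a + 1)) by (apply RinvN_pos).
    destruct (HL (disc L (mkposreal _ Ha)) N) as [p Hp].
    - exists (mkposreal _ Ha). intros x Hx. exact Hx.
    - exists p. exact Hp. }
  destruct (choice _ Hnext) as [next Hnx].
  set (psi := nat_rect (fun _ => nat) (next (O, O)) (fun a pa => next (S pa, S a))).
  exists psi. split.
  - intros a. exact (proj1 (Hnx (S (psi a), S a))).
  - apply Un_cv_of_inv_bound. intros [|a]; [exact (proj2 (Hnx (O, O))) | exact (proj2 (Hnx _))].
Qed.

Lemma bounded_cv_subseq u B : (forall l, Rabs (u l) <= B) ->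
  exists psi L, strictly_increasing psi /\ Un_cv (fun l => u (psi l)) L.
Proof.
  intros HB.
  destruct (Bolzano_Weierstrass u (fun x => -B <= x <= B) (compact_P3 _ _)) as [L HL].
  { intros l. specialize (HB l). unfold Rabs in HB. destruct (Rcase_abs (u l)); lra. }
  destruct (ValAdh_cv_subseq u L HL) as [psi Hpsi]. exists psi, L. exact Hpsi.
Qed.

Lemma bounded_family_cv_subseq (T : Type) (L : list T) (f : nat -> T -> R) B :
  (forall l t, In t L -> Rabs (f l t) <= B) ->
  exists psi (lim : T -> R), strictly_increasing psi /\
    forall t, In t L -> Un_cv (fun l => f (psi l) t) (lim t).
Proof.
  induction L as [|t0 L IH]; intros HB.
  - exists (fun a => a), (fun _ => 0). split; [intros a; lia | intros t []].
  - destruct IH as [psi [lim [Hpsi Hlim]]]; [intros l t Ht; apply HB; right; exact Ht|].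
    destruct (bounded_cv_subseq (fun l => f (psi l) t0) B) as [chi [L0 [Hchi Hcv]]];
      [intros l; apply HB; left; reflexivity|].
    exists (fun a => psi (chi a)),
      (fun t => if excluded_middle_informative (t = t0) then L0 else lim t).
    split; [apply strictly_increasing_comp; auto|].
    intros t Ht. destruct (excluded_middle_informative (t = t0)) as [->|Hne]; [exact Hcv|].
    destruct Ht as [Ht|Ht]; [congruence|].
    apply (Un_cv_subseq (fun l => f (psi l) t)); auto.
Qed.

Lemma bounded_matrix_cv_subseq m (cs : nat -> nat -> nat -> R) B :
  (forall l k i, (k < m)%nat -> (i < m)%nat -> Rabs (cs l k i) <= B) ->
  exists psi cst, strictly_increasing psi /\
    forall k i, (k < m)%nat -> (i < m)%nat -> Un_cv (fun l => cs (psi l) k i) (cst k i).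
Proof.
  intros HB.
  destruct (bounded_family_cv_subseq _ (list_prod (seq 0 m) (seq 0 m))
              (fun l ki => cs l (fst ki) (snd ki)) B) as [psi [lim [Hpsi Hlim]]].
  - intros l [k i] Hki. apply in_prod_iff in Hki. rewrite !in_seq in Hki. apply HB; simpl; lia.
  - exists psi, (fun k i => lim (k, i)). split; [exact Hpsi|].
    intros k i Hk Hi. apply (Hlim (k, i)). apply in_prod_iff. rewrite !in_seq. lia.
Qed.

(** * Boundedness of SAGE decompositions *)

Definition offdiag (m k : nat) (c : nat -> R) : R :=
  sumR m (fun i => if Nat.eqb i k then 0 else c i).

Lemma offdiag_nonneg n m A k c : C_AGE n m A k c -> 0 <= offdiag m k c.
Proof.
  intros [_ Hc]. apply sumR_nonneg. intros i Hi.
  destruct (Nat.eqb_spec i k); [lra | apply Hc; auto].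
Qed.

Lemma AGE_diag_ge n m A k c : (k < m)%nat -> C_AGE n m A k c -> - offdiag m k c <= c k.
Proof.
  intros Hk [Hc _]. specialize (Hc (fun _ => 0)).
  rewrite Sig_at_0, (sumR_split m c k Hk) in Hc. unfold offdiag. lra.
Qed.

Lemma distinct_columns_gap_points n m A r : distinct_columns n m A ->
  exists Y : nat -> nat -> nat -> R, forall i k, (i < m)%nat -> (k < m)%nat -> i <> k ->
    expo n A i (Y i k) - expo n A k (Y i k) = r.
Proof.
  intros Hdist.
  assert (Hpt : forall i k, exists y, (i < m)%nat -> (k < m)%nat -> i <> k ->
                  expo n A i y - expo n A k y = r).
  { intros i k. destruct (classic ((i < m)%nat /\ (k < m)%nat /\ i <> k)) as [[Hi [Hk Hik]]|Hn].
    - destruct (Hdist i k Hi Hk Hik) as [j [Hj Hji]].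
      exists (fun j' => if Nat.eqb j' j then r / (A j i - A j k) else 0). intros _ _ _.
      unfold expo. rewrite <- sumR_minus, (sumR_single n _ j Hj), Nat.eqb_refl.
      + field. intros H. apply Hji. lra.
      + intros j' _ Hj'. destruct (Nat.eqb_spec j' j); [lia | ring].
    - exists (fun _ => 0). intros Hi Hk Hik. tauto. }
  destruct (choice _ (fun i => choice _ (Hpt i))) as [Y HY].
  exists Y. intros i k. exact (HY i k).
Qed.

Section Probes.
Variables (n m : nat) (A : nat -> nat -> R) (Y : nat -> nat -> nat -> R).
(* The gap [ln (m+1)] is what [offdiag_le_probe] needs: summing over [i] gives
   [m c_k + (m+1) offdiag <= probe], and [c_k + offdiag >= 0] (evaluation at [x = 0]). *)
Hypothesis HY : forall i k, (i < m)%nat -> (k < m)%nat -> i <> k ->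
  expo n A i (Y i k) - expo n A k (Y i k) = ln (INR (S m)).

Definition probe (k : nat) (c : nat -> R) : R :=
  sumR m (fun i => exp (- expo n A k (Y i k)) * Sig n m A c (Y i k)).

Lemma probe_msum k cs : probe k (msum m cs) = sumR m (fun j => probe k (cs j)).
Proof.
  unfold probe. rewrite <- sumR_swap. apply sumR_ext. intros i _.
  rewrite Sig_msum, <- sumR_scal. reflexivity.
Qed.

Lemma probe_NNS_nonneg k c : C_NNS n m A c -> 0 <= probe k c.
Proof.
  intros Hc. apply sumR_nonneg. intros i _. apply Rmult_le_pos; [apply Rlt_le, exp_pos | apply Hc].
Qed.

Lemma probe_le k c d : (forall i, (i < m)%nat -> c i <= d i) -> probe k c <= probe k d.
Proof.
  intros H. apply sumR_le. intros i _. apply Rmult_le_compat_l; [apply Rlt_le, exp_pos|].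
  apply sumR_le. intros l Hl. apply Rmult_le_compat_r; [apply Rlt_le, exp_pos | auto].
Qed.

Lemma probe_term_ge k c i : (k < m)%nat -> (i < m)%nat -> C_AGE n m A k c ->
  c k + INR (S m) * (if Nat.eqb i k then 0 else c i) <=
  exp (- expo n A k (Y i k)) * Sig n m A c (Y i k).
Proof.
  intros Hk Hi [_ Hc]. set (y := Y i k).
  set (g := fun l => if Nat.eqb l k then 0 else c l * exp (expo n A l y - expo n A k y)).
  assert (Hsig : exp (- expo n A k y) * Sig n m A c y = c k + sumR m g).
  { unfold Sig. rewrite <- sumR_scal, (sumR_split m _ k Hk). unfold g.
    assert (Hx : forall a e f, exp (- e) * (a * exp f) = a * exp (f - e))
      by (intros; unfold Rminus; rewrite exp_plus; ring).
    unfold expo. rewrite Hx, Rminus_diag, exp_0, Rmult_1_r. f_equal.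
    apply sumR_ext. intros l _. destruct (Nat.eqb l k); [reflexivity | apply Hx]. }
  assert (Hg : forall l, (l < m)%nat -> 0 <= g l).
  { intros l Hl. unfold g. destruct (Nat.eqb_spec l k); [lra|].
    apply Rmult_le_pos; [apply Hc; auto | apply Rlt_le, exp_pos]. }
  rewrite Hsig. destruct (Nat.eqb_spec i k) as [->|Hik].
  - assert (0 <= sumR m g) by (apply sumR_nonneg; exact Hg). lra.
  - assert (Hgi : g i = INR (S m) * c i).
    { unfold g, y. destruct (Nat.eqb_spec i k); [lia|].
      rewrite HY, exp_ln by (auto; apply lt_0_INR; lia). ring. }
    assert (g i <= sumR m g) by (apply sumR_ge_term; auto). lra.
Qed.

Lemma offdiag_le_probe k c : (k < m)%nat -> C_AGE n m A k c -> offdiag m k c <= probe k c.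
Proof.
  intros Hk Hc.
  assert (Hsum := sumR_le m _ _ (fun i Hi => probe_term_ge k c i Hk Hi Hc)).
  rewrite sumR_plus, sumR_const, sumR_scal in Hsum. fold (offdiag m k c) in Hsum.
  fold (probe k c) in Hsum. rewrite S_INR in Hsum.
  assert (H0 := AGE_diag_ge n m A k c Hk Hc). assert (H1 := offdiag_nonneg n m A k c Hc).
  assert (0 <= INR m) by apply pos_INR. nra.
Qed.

End Probes.

Lemma SAGE_decomp_entry_bound n m A cs k i B U :
  SAGE_decomp n m A cs -> (k < m)%nat -> (i < m)%nat ->
  offdiag m k (cs k) <= B -> msum m cs k <= U -> Rabs (cs k i) <= B + Rabs U.
Proof.
  intros Hcs Hk Hi HB HS.
  assert (Hoff := offdiag_nonneg n m A k (cs k) (Hcs k Hk)).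
  assert (HUabs := Rle_abs U). assert (HUpos := Rabs_pos U).
  destruct (Nat.eq_dec i k) as [->|Hik].
  - assert (Hlow := AGE_diag_ge n m A k (cs k) Hk (Hcs k Hk)).
    assert (Hup : cs k k <= msum m cs k).
    { unfold msum. rewrite (sumR_split m _ k Hk).
      assert (0 <= offdiag m k (fun j => cs j k)); [|unfold offdiag in *; lra].
      apply sumR_nonneg. intros j Hj. destruct (Nat.eqb_spec j k); [lra|].
      apply (proj2 (Hcs j Hj)); auto. }
    apply Rabs_le. lra.
  - assert (Hnn : 0 <= cs k i) by (apply (proj2 (Hcs k Hk)); auto).
    assert (cs k i <= offdiag m k (cs k)).
    { assert (Ht := sumR_ge_term m (fun l => if Nat.eqb l k then 0 else cs k l) i).
      simpl in Ht. destruct (Nat.eqb_spec i k); [lia|]. apply Ht; [|exact Hi].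
      intros l Hl. destruct (Nat.eqb_spec l k); [lra | apply (proj2 (Hcs k Hk)); auto]. }
    rewrite Rabs_right by lra. lra.
Qed.

Lemma SAGE_decomp_bounded n m A U : distinct_columns n m A ->
  exists B, forall cs, SAGE_decomp n m A cs -> (forall i, (i < m)%nat -> msum m cs i <= U) ->
    forall k i, (k < m)%nat -> (i < m)%nat -> Rabs (cs k i) <= B.
Proof.
  intros Hdist. destruct (distinct_columns_gap_points n m A (ln (INR (S m))) Hdist) as [Y HY].
  set (B := sumR m (fun k => Rabs (probe n m A Y k (fun _ => U)))).
  exists (B + Rabs U). intros cs Hcs HS k i Hk Hi.
  apply (SAGE_decomp_entry_bound n m A); auto.
  apply (Rle_trans _ (probe n m A Y k (cs k))); [apply offdiag_le_probe; auto|].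
  apply (Rle_trans _ (probe n m A Y k (msum m cs))).
  { rewrite probe_msum. apply (sumR_ge_term m (fun j => probe n m A Y k (cs j))); auto.
    intros j Hj. apply probe_NNS_nonneg, (Hcs j Hj). }
  apply (Rle_trans _ (probe n m A Y k (fun _ => U))); [apply probe_le; auto|].
  apply (Rle_trans _ _ _ (Rle_abs _)).
  apply (sumR_ge_term m (fun k => Rabs (probe n m A Y k (fun _ => U)))); auto.
  intros; apply Rabs_pos.
Qed.

(** * Nearest decompositions and separation *)

Lemma AGE_closed n m A k (cl : nat -> nat -> R) c :
  (forall l, C_AGE n m A k (cl l)) -> (forall i, (i < m)%nat -> Un_cv (fun l => cl l i) (c i)) ->
  C_AGE n m A k c.
Proof.
  intros Hcl Hc. split.
  - intros x. apply (@Rle_cv_lim (fun _ => 0) (fun l => Sig n m A (cl l) x)).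
    + intros l. apply (Hcl l).
    + apply Un_cv_const.
    + apply sumR_cv. intros i Hi. apply CV_mult; [apply Hc; exact Hi | apply Un_cv_const].
  - intros i Hi Hik. apply (@Rle_cv_lim (fun _ => 0) (fun l => cl l i)).
    + intros l. apply (proj2 (Hcl l)); auto.
    + apply Un_cv_const.
    + apply Hc; exact Hi.
Qed.

Lemma sqdist_cv m p (ul : nat -> nat -> R) u :
  (forall i, (i < m)%nat -> Un_cv (fun l => ul l i) (u i)) ->
  Un_cv (fun l => sqdist m p (ul l)) (sqdist m p u).
Proof.
  intros H. apply (sumR_cv m (fun l i => (ul l i - p i) * (ul l i - p i))).
  intros i Hi. assert (Hd := CV_minus _ _ _ _ (H i Hi) (Un_cv_const (p i))).
  exact (CV_mult _ _ _ _ Hd Hd).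
Qed.

Lemma exists_minimizing_seq (X : Type) (P : X -> Prop) (f : X -> R) :
  (exists x, P x) -> (forall x, P x -> 0 <= f x) ->
  exists d (xs : nat -> X), (forall x, P x -> d <= f x) /\
    forall j, P (xs j) /\ f (xs j) < d + / (INR j + 1).
Proof.
  intros [x0 Hx0] Hf.
  destruct (completeness (fun r => exists x, P x /\ r = - f x)) as [M [HM1 HM2]].
  - exists 0. intros r [x [Hx ->]]. specialize (Hf x Hx). lra.
  - exists (- f x0). exists x0. auto.
  - assert (Hd : forall x, P x -> - M <= f x).
    { intros x Hx. assert (- f x <= M) by (apply HM1; exists x; auto). lra. }
    assert (Hj : forall j, exists x, P x /\ f x < - M + / (INR j + 1)).
    { intros j. apply NNPP. intros Hn. assert (Hpos : 0 < / (INR j + 1)) by apply RinvN_pos.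
      assert (M <= M - / (INR j + 1)); [|lra].
      apply HM2. intros r [x [Hx ->]]. apply Rnot_lt_le. intros Hlt.
      apply Hn. exists x. split; [exact Hx | lra]. }
    destruct (choice _ Hj) as [xs Hxs]. exists (- M), xs. auto.
Qed.

Lemma sqdist_le_coord m p u r : sqdist m p u <= r ->
  forall i, (i < m)%nat -> u i <= sumR m (fun i => Rabs (p i)) + Rabs r + 1.
Proof.
  intros H i Hi.
  assert (Hsq : (u i - p i) * (u i - p i) <= r).
  { eapply Rle_trans; [|exact H].
    apply (sumR_ge_term m (fun i => (u i - p i) * (u i - p i))); [intros; apply Rle_0_sqr | exact Hi]. }
  assert (Hp : Rabs (p i) <= sumR m (fun i => Rabs (p i)))
    by (apply (sumR_ge_term m (fun i => Rabs (p i))); [intros; apply Rabs_pos | exact Hi]).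
  assert (Hpi := Rle_abs (p i)). assert (Hr := Rle_abs r).
  assert (u i - p i <= Rabs r + 1).
  { destruct (Rle_lt_dec (u i - p i) 1); [assert (0 <= Rabs r) by apply Rabs_pos; lra|].
    assert (u i - p i <= (u i - p i) * (u i - p i)) by nra. lra. }
  lra.
Qed.

Lemma exists_nearest_decomp n m A p : distinct_columns n m A ->
  exists cs, SAGE_decomp n m A cs /\
    forall cs', SAGE_decomp n m A cs' -> sqdist m p (msum m cs) <= sqdist m p (msum m cs').
Proof.
  intros Hdist.
  destruct (exists_minimizing_seq _ (SAGE_decomp n m A) (fun cs => sqdist m p (msum m cs)))
    as [d [CS [Hd HCS]]].
  { exists (fun _ _ => 0). intros k _. apply AGE_0. }
  { intros cs _. apply sqdist_nonneg. }
  destruct (SAGE_decomp_bounded n m A (sumR m (fun i => Rabs (p i)) + Rabs (d + 1) + 1) Hdist)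
    as [B HB].
  destruct (bounded_matrix_cv_subseq m CS B) as [psi [cs [Hpsi Hcv]]].
  { intros l k i Hk Hi. apply HB; auto; [apply HCS|].
    apply sqdist_le_coord. destruct (HCS l) as [_ Hl].
    assert (/ (INR l + 1) <= 1) by (rewrite <- Rinv_1; apply Rinv_le_contravar;
                                    [lra | assert (Hl0 := pos_INR l); lra]).
    lra. }
  assert (Hmsum : forall i, (i < m)%nat -> Un_cv (fun l => msum m (CS (psi l)) i) (msum m cs i))
    by (intros i Hi; apply (sumR_cv m (fun l k => CS (psi l) k i)); auto).
  exists cs. split.
  - intros k Hk. apply (AGE_closed n m A k (fun l => CS (psi l) k)); [intros l; apply HCS; auto|].
    intros i Hi. apply Hcv; auto.
  - intros cs' Hcs'. apply (Rle_trans _ d); [|apply Hd; exact Hcs'].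
    apply (@Rle_cv_lim (fun l => sqdist m p (msum m (CS (psi l)))) (fun l => d + / (INR l + 1)));
      [| exact (sqdist_cv m p _ _ Hmsum) |].
    + intros l. destruct (HCS (psi l)) as [_ Hl].
      assert (/ (INR (psi l) + 1) <= / (INR l + 1)); [|simpl; lra].
      apply Rinv_le_contravar; [assert (Hl0 := pos_INR l); lra|].
      apply Rplus_le_compat_r, le_INR, strictly_increasing_ge_id; exact Hpsi.
    + assert (Hlim := CV_plus _ _ _ _ (Un_cv_const d) RinvN_cv).
      rewrite Rplus_0_r in Hlim. exact Hlim.
Qed.

Lemma SAGE_separation n m A p : distinct_columns n m A -> ~ C_SAGE n m A p ->
  exists v, dual_cone m (C_SAGE n m A) v /\ dot m v p < 0.
Proof.
  intros Hdist. destruct (exists_nearest_decomp n m A p Hdist) as [cs [Hcs Hmin]].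
  apply (separation_of_nearest_decomp n m A p cs Hcs Hmin).
Qed.

(** * Strong duality *)

Lemma is_esup_exists (P : R -> Prop) :
  (exists t, forall g, P g -> g <= t) -> exists s, is_esup P s.
Proof.
  intros Hbd. destruct (classic (exists g, P g)) as [Hne|Hemp].
  - destruct (completeness P Hbd Hne) as [sup [Hub Hleast]]. exists (Fin sup). split.
    + intros g Hg. exact (Hub g Hg).
    + intros [b| |] Hb; simpl; [apply Hleast; exact Hb | exact I |].
      destruct Hne as [g Hg]. exact (Hb g Hg).
  - exists MInf. split; [intros g Hg; exfalso; eauto | intros; exact I].
Qed.

Lemma ERle_Fin_dense b s : ~ ERle (Fin b) s -> exists g, g < b /\ ~ ERle (Fin g) s.
Proof.
  destruct s as [r| |]; simpl; intros Hbs.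
  - exists ((r + b) / 2). split; lra.
  - exfalso. exact (Hbs I).
  - exists (b - 1). split; [lra | auto].
Qed.

(* A duality gap would leave a non-feasible [g] below some lower bound [b] of [D]. *)
Lemma is_einf_of_duality (P D : R -> Prop) s :
  is_esup P s -> (exists t, D t) -> (forall g t, P g -> D t -> g <= t) ->
  (forall g b, ~ P g -> g < b -> exists t, D t /\ t < b) -> is_einf D s.
Proof.
  intros [Hub Hleast] [t0 Ht0] Hweak Hgap. split.
  - intros t Ht. apply Hleast. intros g Hg. exact (Hweak g t Hg Ht).
  - intros [b| |] Hb; [| destruct (Hb t0 Ht0) | exact I].
    apply NNPP. intros Hbs. destruct (ERle_Fin_dense b s Hbs) as [g [Hgb Hgs]].
    assert (Hg : ~ P g) by (intros Hg; exact (Hgs (Hub g Hg))).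
    destruct (Hgap g b Hg Hgb) as [t [Ht Htb]]. specialize (Hb t Ht). simpl in Hb. lra.
Qed.

Lemma dot_sub_e1 m v c g : (0 < m)%nat ->
  dot m v (fun i => c i - g * e1 i) = dot m c v - g * v 0%nat.
Proof.
  intros Hm. rewrite <- (dot_e1 m v Hm). unfold dot.
  rewrite <- sumR_scal, <- sumR_minus. apply sumR_ext. intros; ring.
Qed.

Lemma SAGE_weak_duality n m A c g v : (0 < m)%nat ->
  C_SAGE n m A (fun i => c i - g * e1 i) -> dual_cone m (C_SAGE n m A) v -> v 0%nat = 1 ->
  g <= dot m c v.
Proof.
  intros Hm Hg Hv Hv0. specialize (Hv _ Hg). rewrite dot_sub_e1, Hv0 in Hv by exact Hm. lra.
Qed.

(* Mixing the separating functional with a small multiple of the all-ones dual vector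
   makes its first coordinate positive, so that it can be normalized. *)
Lemma SAGE_dual_gap n m A c g b : (0 < m)%nat -> distinct_columns n m A ->
  ~ C_SAGE n m A (fun i => c i - g * e1 i) -> g < b ->
  exists v, dual_cone m (C_SAGE n m A) v /\ v 0%nat = 1 /\ dot m c v < b.
Proof.
  intros Hm Hdist Hg Hgb.
  destruct (SAGE_separation n m A _ Hdist Hg) as [v [Hv Hvg]].
  rewrite dot_sub_e1 in Hvg by exact Hm.
  assert (Hv0 : 0 <= v 0%nat) by (rewrite <- (dot_e1 m v Hm); apply Hv, e1_in_SAGE, Hm).
  set (t0 := dot m c (fun _ => 1)). set (delta := dot m c v - b * v 0%nat).
  assert (Hdelta : delta < 0) by (unfold delta; nra).
  assert (Habs := Rle_abs (t0 - b)). assert (Habs0 := Rabs_pos (t0 - b)).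
  set (eps := - delta / (Rabs (t0 - b) + 1)).
  assert (Heps : 0 < eps) by (unfold eps; apply Rdiv_lt_0_compat; lra).
  assert (Heps' : eps * (Rabs (t0 - b) + 1) = - delta) by (unfold eps; field; lra).
  exists (fun i => / (v 0%nat + eps) * v i + eps / (v 0%nat + eps) * 1). split; [|split].
  - apply dual_cone_comb; [left; apply Rinv_0_lt_compat; lra | apply Rlt_le, Rdiv_lt_0_compat; lra |
                           exact Hv | apply ones_in_SAGE_dual].
  - field. lra.
  - rewrite dot_comm, dot_comb, (dot_comm m v c), (dot_comm m _ c). fold t0.
    apply (Rmult_lt_reg_l (v 0%nat + eps)); [lra|]. field_simplify; [|lra].
    assert (eps * (t0 - b) <= eps * Rabs (t0 - b)) by (apply Rmult_le_compat_l; lra).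
    unfold delta in Heps'. lra.
Qed.

Theorem mainTheorem1 (n m : nat) (A : nat -> nat -> R) (c : nat -> R)
  (Hm : (0 < m)%nat)
  (Hdist : distinct_columns n m A)
  (Ha1 : forall j, (j < n)%nat -> A j 0%nat = 0) :
  exists s : ER,
    is_esup (fun gamma => C_SAGE n m A (fun i => c i - gamma * e1 i)) s /\
    is_einf (fun t => exists v : nat -> R,
                 dual_cone m (C_SAGE n m A) v /\ v 0%nat = 1 /\ t = dot m c v) s.
Proof.
  assert (Hones := ones_in_SAGE_dual n m A).
  destruct (is_esup_exists (fun gamma => C_SAGE n m A (fun i => c i - gamma * e1 i))) as [s Hs].
  { exists (dot m c (fun _ => 1)). intros g Hg. apply (SAGE_weak_duality n m A); auto. }
  exists s. split; [exact Hs|]. apply (is_einf_of_duality _ _ s Hs).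
  - exists (dot m c (fun _ => 1)), (fun _ => 1). auto.
  - intros g t Hg [v [Hv [Hv0 ->]]]. apply (SAGE_weak_duality n m A); auto.
  - intros g b Hg Hgb. destruct (SAGE_dual_gap n m A c g b Hm Hdist Hg Hgb) as [v Hv].
    exists (dot m c v). split; [exists v; tauto | tauto].
Qed.
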